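(* Let $\{A_j\}_{j=1}^m$ be Hermitian $n\times n$ matrices and $n\geq r$. If the map $\beta:\mathbb{C}^{n\times r}/U(r)\to\mathbb{R}^m$, $\beta_j(z)=\mathrm{Re}\,\mathrm{tr}(A_jzz^* )$, is injective, then $$a_0=\inf\Big\{\frac{\|\beta(x)-\beta(y)\|_2^2}{\|xx^*-yy^*\|_2^2}: x,y\in\mathbb{C}^{n\times r},\ xx^*\neq yy^*\Big\}>0.$$
   Context: $\mathbb{C}^{n\times r}/U(r)$ is the set of classes under $x\sim y$ iff $x=yU$ with $U$ unitary; $\beta$ is well defined on classes. $\|\cdot\|_2$ is the Euclidean/Frobenius norm. *)

From HB Require Import structures.
From mathcomp Require Import all_boot all_order all_algebra.
From mathcomp Require Import complex.
From mathcomp Require Import all_classical all_reals.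
From mathcomp Require Import ereal.
Set Implicit Arguments. Unset Strict Implicit. Unset Printing Implicit Defensive.
Import Order.TTheory GRing.Theory Num.Theory.
Local Open Scope ring_scope.
Local Open Scope complex_scope.

Definition adj (R : realType) (p q : nat) (z : 'M[R[i]]_(p, q)) : 'M[R[i]]_(q, p) :=
  (map_mx (@conjc R) z)^T.

Definition is_hermitian (R : realType) (n : nat) (A : 'M[R[i]]_n) : Prop :=
  adj A = A.

Definition is_unitary (R : realType) (r : nat) (U : 'M[R[i]]_r) : Prop :=
  U *m adj U = 1%:M.

Definition beta (R : realType) (n r m : nat) (A : 'I_m -> 'M[R[i]]_n)
  (z : 'M[R[i]]_(n, r)) : 'I_m -> R :=
  fun j => complex.Re (\tr (A j *m z *m adj z)).

Definition beta_injective_mod_U (R : realType) (n r m : nat)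
  (A : 'I_m -> 'M[R[i]]_n) : Prop :=
  forall x y : 'M[R[i]]_(n, r), beta A x =1 beta A y ->
    exists U : 'M[R[i]]_r, is_unitary U /\ x = y *m U.

Definition vnorm2 (R : realType) (m : nat) (v : 'I_m -> R) : R :=
  \sum_(j < m) v j ^+ 2.

Definition frob2 (R : realType) (p q : nat) (M : 'M[R[i]]_(p, q)) : R :=
  \sum_(i < p) \sum_(j < q) (complex.Re (M i j) ^+ 2 + complex.Im (M i j) ^+ 2).

(* a_0 as an extended real: the infimum (+oo for an empty set) *)
Definition a0 (R : realType) (n r m : nat) (A : 'I_m -> 'M[R[i]]_n) : \bar R :=
  ereal_inf [set (t%:E)%E | t in
    [set t : R | exists x y : 'M[R[i]]_(n, r),
       x *m adj x != y *m adj y /\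
       t = vnorm2 (fun j => beta A x j - beta A y j)
           / frob2 (x *m adj x - y *m adj y)]]%classic.

(* Let D = x x^* - y y^*, scaled to Frobenius norm 1.  The ratio in a_0 depends
   only on D and is invariant under this scaling.  D is Hermitian, and on the
   kernel of z |-> z x, a subspace of codimension at most r, the form z D z^*
   equals -|z y|^2 <= 0; hence D has at most r positive eigenvalues and, by
   symmetry, at most r negative ones.  Splitting its spectral decomposition into
   positive and negative parts writes D = x' x'^* - y' y'^* with x', y' in
   C^{n x r} of squared Frobenius norm at most n.  So a_0 is bounded below by
   the minimum of the continuous function (x', y') |-> |beta x' - beta y'|^2
   on the compact set of such bounded pairs with |x' x'^* - y' y'^*| = 1, and
   this minimum is positive because beta is injective modulo U(r). *)

From HB Require Import structures.
From mathcomp Require Import all_boot all_order all_algebra.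
From mathcomp Require Import complex.
From mathcomp Require Import all_classical all_reals.
From mathcomp Require Import ereal.
From mathcomp Require Import sesquilinear spectral all_analysis.
From mathcomp Require Import ring lra.
Set Implicit Arguments. Unset Strict Implicit. Unset Printing Implicit Defensive.
Import Order.TTheory GRing.Theory Num.Theory numFieldNormedType.Exports.
Local Open Scope ring_scope.
Local Open Scope complex_scope.
Local Open Scope sesquilinear_scope.

Section ComplexMatrices.
Variable R : realType.
Local Notation C := R[i].
Implicit Types (p q : nat).

Lemma adjE p q (M : 'M[C]_(p, q)) : adj M = M ^t*.
Proof. by rewrite /adj map_trmx. Qed.

Lemma adjM p q s (M : 'M[C]_(p, q)) (N : 'M[C]_(q, s)) :
  adj (M *m N) = adj N *m adj M.
Proof. by rewrite /adj map_mxM trmx_mul. Qed.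

Lemma adjK p q (M : 'M[C]_(p, q)) : adj (adj M) = M.
Proof. by rewrite !adjE trmxCK. Qed.

Lemma adjB p q (M N : 'M[C]_(p, q)) : adj (M - N) = adj M - adj N.
Proof. by rewrite /adj map_mxB linearB. Qed.

Lemma adj_realZ p q (a : R) (M : 'M[C]_(p, q)) : adj (a%:C *: M) = a%:C *: adj M.
Proof.
apply/matrixP => i j; rewrite !mxE rmorphM; congr (_ * _).
by apply/eqP; rewrite eq_complex /= oppr0 !eqxx.
Qed.

Lemma adj_gram_sub p q (x y : 'M[C]_(p, q)) :
  adj (x *m adj x - y *m adj y) = x *m adj x - y *m adj y.
Proof. by rewrite adjB !adjM !adjK. Qed.

Definition cnorm2 (z : C) : R := complex.Re z ^+ 2 + complex.Im z ^+ 2.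

Lemma cnorm2_ge0 z : 0 <= cnorm2 z.
Proof. by rewrite addr_ge0 ?sqr_ge0. Qed.

Lemma cnorm20 : cnorm2 0 = 0.
Proof. by rewrite /cnorm2 /= expr0n addr0. Qed.

Lemma cnorm2_eq0 z : (cnorm2 z == 0) = (z == 0).
Proof.
case: z => a b; rewrite /cnorm2 paddr_eq0 ?sqr_ge0 // !sqrf_eq0.
by rewrite eq_complex.
Qed.

Lemma Re_sum I (s : seq I) (P : pred I) (F : I -> C) :
  complex.Re (\sum_(i <- s | P i) F i) = \sum_(i <- s | P i) complex.Re (F i).
Proof. by apply: (big_morph _ _ (erefl _)) => [[a b] [c d]]. Qed.

Lemma Re_realM (a : R) (z : C) : complex.Re (a%:C * z) = a * complex.Re z.
Proof. by case: z => u v /=; ring. Qed.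

Lemma Re_mul_conj (z : C) : complex.Re (z * z^*) = cnorm2 z.
Proof. by case: z => a b; rewrite /cnorm2 /=; ring. Qed.

Lemma frob2E p q (M : 'M[C]_(p, q)) : frob2 M = complex.Re (\tr (M *m adj M)).
Proof.
rewrite Re_sum; apply: eq_bigr => i _; rewrite !mxE Re_sum.
by apply: eq_bigr => j _; rewrite !mxE Re_mul_conj.
Qed.

Lemma cnorm2_le_frob2 p q (M : 'M[C]_(p, q)) i j : cnorm2 (M i j) <= frob2 M.
Proof.
rewrite /frob2 (bigD1 i) //= (bigD1 j) //= -addrA lerDl.
by rewrite addr_ge0 ?sumr_ge0 // => *; rewrite ?sumr_ge0 // => *; apply: cnorm2_ge0.
Qed.

Lemma frob2_ge0 p q (M : 'M[C]_(p, q)) : 0 <= frob2 M.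
Proof. by rewrite !sumr_ge0 // => *; rewrite sumr_ge0 // => *; apply: cnorm2_ge0. Qed.

Lemma frob2_gt0 p q (M : 'M[C]_(p, q)) : M != 0 -> 0 < frob2 M.
Proof.
move=> M0; rewrite lt_def frob2_ge0 andbT; apply: contraNneq M0 => M0.
apply/eqP/matrixP => i j; rewrite mxE; apply/eqP; rewrite -cnorm2_eq0 eq_le.
by rewrite cnorm2_ge0 -M0 cnorm2_le_frob2.
Qed.

Lemma frob2_realZ p q (a : R) (M : 'M[C]_(p, q)) :
  frob2 (a%:C *: M) = a ^+ 2 * frob2 M.
Proof.
rewrite /frob2 mulr_sumr; apply: eq_bigr => i _; rewrite mulr_sumr.
by apply: eq_bigr => j _; rewrite !mxE; case: (M i j) => u v /=; ring.
Qed.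

End ComplexMatrices.

Section RealDiagonal.
Variable R : realType.
Local Notation C := R[i].

Definition rdiag_mx n (l : 'I_n -> R) : 'M[C]_n := diag_mx (\row_i (l i)%:C).

Lemma rdiag_mx_ext n (f g : 'I_n -> R) : f =1 g -> rdiag_mx f = rdiag_mx g.
Proof. by move=> fg; apply/matrixP => i j; rewrite !mxE fg. Qed.

Lemma adj_rdiag_mx n (l : 'I_n -> R) : adj (rdiag_mx l) = rdiag_mx l.
Proof.
apply/matrixP => i j; rewrite !mxE eq_sym.
case: eqP => [->|_]; rewrite ?mulr1n ?mulr0n;
  by apply/eqP; rewrite eq_complex /= oppr0 !eqxx.
Qed.

Lemma rdiag_mxB n (f g : 'I_n -> R) :
  rdiag_mx f - rdiag_mx g = rdiag_mx (fun i => f i - g i).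
Proof.
apply/matrixP => i j; rewrite !mxE.
case: eqP => _; rewrite ?mulr1n ?mulr0n ?subr0 //.
by apply/eqP; rewrite eq_complex /= subrr !eqxx.
Qed.

Lemma rdiag_mxZ n (a : R) (l : 'I_n -> R) :
  a%:C *: rdiag_mx l = rdiag_mx (fun i => a * l i).
Proof.
apply/matrixP => i j; rewrite !mxE.
case: eqP => _; rewrite ?mulr1n ?mulr0n ?mulr0 //.
by apply/eqP; rewrite eq_complex /= !mul0r !mulr0 subr0 addr0 !eqxx.
Qed.

Lemma mul_rdiag_mx n (f g : 'I_n -> R) :
  rdiag_mx f *m rdiag_mx g = rdiag_mx (fun i => f i * g i).
Proof.
rewrite /rdiag_mx mulmx_diag; congr diag_mx; apply/rowP => i; rewrite !mxE.
by apply/eqP; rewrite eq_complex /= !mul0r !mulr0 subr0 addr0 !eqxx.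
Qed.

Lemma Re_tr_rdiag_mx n (l : 'I_n -> R) : complex.Re (\tr (rdiag_mx l)) = \sum_i l i.
Proof. by rewrite mxtrace_diag Re_sum; apply: eq_bigr => i _; rewrite mxE. Qed.

Lemma Re_rdiag_form n (l : 'I_n -> R) (w : 'rV[C]_n) :
  complex.Re ((w *m rdiag_mx l *m adj w) 0 0) = \sum_k l k * cnorm2 (w 0 k).
Proof.
rewrite mul_mx_diag !mxE Re_sum; apply: eq_bigr => k _; rewrite !mxE.
by case: (w 0 k) => a b; rewrite /cnorm2 /=; ring.
Qed.

Lemma Re_gram_form n (w : 'rV[C]_n) :
  complex.Re ((w *m adj w) 0 0) = \sum_k cnorm2 (w 0 k).
Proof. by rewrite !mxE Re_sum; apply: eq_bigr => k _; rewrite !mxE Re_mul_conj. Qed.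

Lemma hermitian_spectral n (H : 'M[C]_n) : adj H = H ->
  exists (P : 'M[C]_n) (l : 'I_n -> R), P \is unitarymx /\
    H = adj P *m rdiag_mx l *m P.
Proof.
move=> adjH; have hermH : H \is hermsymmx.
  by rewrite qualifE /= expr0 scale1r -map_trmx -/(adj H) adjH.
have realH := hermitian_spectral_diag_real hermH.
exists (spectralmx H), (fun i => complex.Re (spectral_diag H 0 i)); split.
  exact: spectral_unitarymx.
rewrite {1}(orthomx_spectralP (hermitian_normalmx hermH)).
rewrite (invmx_unitary (spectral_unitarymx H)) -adjE; congr (_ *m diag_mx _ *m _).
apply/rowP => i; rewrite mxE; apply/esym/RRe_real.
by move/mxOverP: realH; apply.
Qed.

Lemma unitary_mul_adj n (P : 'M[C]_n) : P \is unitarymx -> P *m adj P = 1%:M.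
Proof. by move/unitarymxP; rewrite adjE. Qed.

Lemma mxtrace_unitary_conj n (P M : 'M[C]_n) : P \is unitarymx ->
  \tr (adj P *m M *m P) = \tr M.
Proof. by move=> uP; rewrite mxtrace_mulC mulmxA unitary_mul_adj ?mul1mx. Qed.

Lemma frob2_unitary_conj n (P : 'M[C]_n) (l : 'I_n -> R) : P \is unitarymx ->
  frob2 (adj P *m rdiag_mx l *m P) = \sum_i l i ^+ 2.
Proof.
move=> uP; rewrite frob2E !adjM adjK adj_rdiag_mx !mulmxA.
rewrite -(mulmxA _ P) unitary_mul_adj // mulmx1 -(mulmxA (adj P)).
rewrite mul_rdiag_mx mxtrace_unitary_conj // Re_tr_rdiag_mx.
by apply: eq_bigr => i _; rewrite expr2.
Qed.

Lemma frob2_gram_unitary_conj n r (P : 'M[C]_n) (d : 'I_n -> R) (x : 'M[C]_(n, r)) :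
  P \is unitarymx -> x *m adj x = adj P *m rdiag_mx d *m P -> frob2 x = \sum_i d i.
Proof. by move=> uP xd; rewrite frob2E xd mxtrace_unitary_conj // Re_tr_rdiag_mx. Qed.

End RealDiagonal.

Lemma exists_row_kernel (F : fieldType) p q (M : 'M[F]_(p, q)) : (q < p)%N ->
  exists2 u : 'rV_p, u != 0 & u *m M = 0.
Proof.
move=> qp; have : kermx M != 0.
  by rewrite kermx_eq0 /row_free ltn_eqF // (leq_ltn_trans (rank_leq_col M)).
by case/rowV0Pn => u /sub_kermxP uM u0; exists u.
Qed.

Section Inertia.
Variable R : realType.
Local Notation C := R[i].

Definition sel_mx n (S : {set 'I_n}) : 'M[C]_(#|S|, n) :=
  \matrix_(a, k) (k == enum_val a)%:R.

Lemma sel_mx_mul_tr n (S : {set 'I_n}) : sel_mx S *m (sel_mx S)^T = 1%:M.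
Proof.
apply/matrixP => a b; rewrite !mxE (bigD1 (enum_val a)) //= big1.
  by rewrite !mxE eqxx mul1r addr0 (inj_eq enum_val_inj) eq_sym.
by move=> k ka; rewrite !mxE (negPf ka) mul0r.
Qed.

Lemma tr_sel_mx_mul n (S : {set 'I_n}) :
  (sel_mx S)^T *m sel_mx S = rdiag_mx (fun k => (k \in S)%:R).
Proof.
apply/matrixP => k l; rewrite !mxE.
have [kS|kNS] := boolP (k \in S); last first.
  rewrite big1 => [|a _]; first by rewrite mulr0n raddf0 mul0rn.
  rewrite !mxE; case: eqP => [ka|]; last by rewrite mul0r.
  by move: kNS; rewrite ka enum_valP.
rewrite (bigD1 (enum_rank_in kS k)) //= big1.
  rewrite !mxE enum_rankK_in // eqxx mul1r addr0 eq_sym.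
  by case: eqP => _; rewrite ?mulr1n ?mulr0n.
move=> a ak; rewrite !mxE; case: eqP => [ka|]; last by rewrite mul0r.
by move: ak; rewrite -{1}(enum_valK_in kS a) -ka eqxx.
Qed.

Lemma mul_sel_mx_notin p n (S : {set 'I_n}) (M : 'M[C]_(p, #|S|)) i k :
  k \notin S -> (M *m sel_mx S) i k = 0.
Proof.
move=> kNS; rewrite mxE big1 // => a _; rewrite mxE.
by case: eqP => [ka|]; [move: kNS; rewrite ka enum_valP | rewrite mulr0].
Qed.

Lemma gram_sub_form_le0 n r (x y : 'M[C]_(n, r)) (z : 'rV[C]_n) : z *m x = 0 ->
  complex.Re ((z *m (x *m adj x - y *m adj y) *m adj z) 0 0) <= 0.
Proof.
move=> zx0; rewrite mulmxBr mulmxBl !mulmxA zx0 !mul0mx sub0r.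
rewrite -mulmxA -adjM mxE raddfN /= Re_gram_form oppr_le0.
by apply: sumr_ge0 => k _; apply: cnorm2_ge0.
Qed.

Lemma card_pos_eigen_le n r (P : 'M[C]_n) (l : 'I_n -> R) (x y : 'M[C]_(n, r)) :
  P \is unitarymx -> adj P *m rdiag_mx l *m P = x *m adj x - y *m adj y ->
  (#|[set i | (0 < l i)%R]| <= r)%N.
Proof.
move=> uP lxy; set S := [set i | 0 < l i]; rewrite leqNgt; apply/negP => rS.
have [u u0 uM] := exists_row_kernel (sel_mx S *m P *m x) rS.
set w := u *m sel_mx S.
have /rV0Pn [k wk0] : w != 0.
  by apply: contraNneq u0 => w0; rewrite -[u]mulmx1 -sel_mx_mul_tr mulmxA -/w w0 mul0mx.
have lS k' : k' \in S -> 0 < l k' by rewrite inE.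
have wS k' : k' \notin S -> w 0 k' = 0 by apply: mul_sel_mx_notin.
have kS : k \in S by apply: contraNT wk0 => /wS ->.
have wPx : w *m P *m x = 0 by rewrite -uM !mulmxA.
have := gram_sub_form_le0 y wPx; rewrite -lxy adjM !mulmxA.
rewrite -(mulmxA w P) unitary_mul_adj // mulmx1 -(mulmxA _ P) unitary_mul_adj //.
rewrite mulmx1 Re_rdiag_form (bigD1 k) //=.
have term_gt0 : 0 < l k * cnorm2 (w 0 k).
  by rewrite mulr_gt0 ?[0 < cnorm2 _]lt_def ?cnorm2_ge0 ?cnorm2_eq0 ?wk0 ?lS.
have rest_ge0 : 0 <= \sum_(k' | k' != k) l k' * cnorm2 (w 0 k').
  apply: sumr_ge0 => k' _; have [k'S|/wS ->] := boolP (k' \in S).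
    by rewrite mulr_ge0 ?cnorm2_ge0 ?ltW ?lS.
  by rewrite cnorm20 mulr0.
lra.
Qed.

End Inertia.

Arguments sel_mx {R n} S.

Section GramDecomposition.
Variable R : realType.
Local Notation C := R[i].

Lemma adj_pid_mx p q : adj (pid_mx p : 'M[C]_(p, q)) = pid_mx p.
Proof.
apply/matrixP => i j; rewrite !mxE conjc_nat eq_sym.
by case: eqP => // ->.
Qed.

Lemma adj_tr_sel_mx n (S : {set 'I_n}) : adj (sel_mx S)^T = sel_mx (R:=R) S.
Proof. by apply/matrixP => a k; rewrite !mxE conjc_nat. Qed.

Lemma exists_partial_isometry n r (S : {set 'I_n}) : (#|S| <= r)%N ->
  exists Q : 'M[C]_(n, r), Q *m adj Q = rdiag_mx (fun i => (i \in S)%:R).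
Proof.
move=> Sr; exists ((sel_mx S)^T *m pid_mx #|S|).
rewrite adjM adj_pid_mx adj_tr_sel_mx mulmxA -(mulmxA (sel_mx S)^T) mul_pid_mx.
by rewrite minnn (minn_idPr Sr) pid_mx_1 mulmx1 tr_sel_mx_mul.
Qed.

Lemma gram_factor n r (P : 'M[C]_n) (d : 'I_n -> R) :
  P \is unitarymx -> (forall i, 0 <= d i) -> (#|[set i | (d i != 0)%R]| <= r)%N ->
  exists x : 'M[C]_(n, r), x *m adj x = adj P *m rdiag_mx d *m P.
Proof.
move=> uP d_ge0 /exists_partial_isometry [Q QQ].
exists (adj P *m rdiag_mx (fun i => Num.sqrt (d i)) *m Q).
rewrite adjM [adj (_ *m rdiag_mx _)]adjM adjK adj_rdiag_mx !mulmxA -(mulmxA _ Q) QQ.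
rewrite -(mulmxA (adj P)) mul_rdiag_mx -(mulmxA (adj P)) mul_rdiag_mx.
congr (_ *m _ *m _); apply: rdiag_mx_ext => i; rewrite inE.
have [->|di0] := eqVneq (d i) 0; first by rewrite sqrtr0 !mul0r.
by rewrite mulr1 -expr2 sqr_sqrtr.
Qed.

Lemma gram_sub_normal_form n r (H : 'M[C]_n) (x y : 'M[C]_(n, r)) (c : R) :
  0 < c -> c%:C *: H = x *m adj x - y *m adj y -> frob2 H = 1 ->
  exists x' y' : 'M[C]_(n, r),
    H = x' *m adj x' - y' *m adj y' /\ frob2 x' <= n%:R /\ frob2 y' <= n%:R.
Proof.
move=> c_gt0 cH H1.
have adjH : adj H = H.
  apply: (@scalerI _ _ c%:C); first by rewrite fmorph_eq0 gt_eqF.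
  by rewrite -adj_realZ cH adj_gram_sub.
have [P [l [uP Hl]]] := hermitian_spectral adjH.
have l2_le1 i : l i ^+ 2 <= 1.
  rewrite -H1 Hl frob2_unitary_conj // (bigD1 i) //= lerDl.
  by apply: sumr_ge0 => j _; apply: sqr_ge0.
have scaleH (a : R) : adj P *m rdiag_mx (fun i => a * l i) *m P = a%:C *: H.
  by rewrite Hl -rdiag_mxZ scalemxAl scalemxAr.
pose lp i := if 0 < l i then l i else 0.
pose ln i := if l i < 0 then - l i else 0.
have lp_ge0 i : 0 <= lp i by rewrite /lp; case: ifP => // /ltW.
have ln_ge0 i : 0 <= ln i by rewrite /ln; case: ifP => // /ltW; rewrite oppr_ge0.
have card_lp : (#|[set i | (lp i != 0)%R]| <= r)%N.
  have -> : [set i | lp i != 0] = [set i | 0 < c * l i].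
    apply/setP => i; rewrite !inE pmulr_rgt0 // /lp.
    by case: ifP => [/gt_eqF ->|]; rewrite ?eqxx.
  by apply: (card_pos_eigen_le uP); rewrite scaleH cH.
have card_ln : (#|[set i | (ln i != 0)%R]| <= r)%N.
  have -> : [set i | ln i != 0] = [set i | 0 < - c * l i].
    apply/setP => i; rewrite !inE mulNr oppr_gt0 pmulr_rlt0 // /ln.
    by case: ifP => [li|]; rewrite ?eqxx // oppr_eq0 lt_eqF.
  by apply: (card_pos_eigen_le uP); rewrite scaleH rmorphN scaleNr cH opprB.
have [x' x'E] := gram_factor uP lp_ge0 card_lp.
have [y' y'E] := gram_factor uP ln_ge0 card_ln.
exists x', y'; split; [|split].
- rewrite x'E y'E -mulmxBl -mulmxBr rdiag_mxB Hl; congr (_ *m _ *m _).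
  by apply: rdiag_mx_ext => i; rewrite /lp /ln; case: ifP; case: ifP; lra.
- rewrite (frob2_gram_unitary_conj uP x'E) -[n in n%:R]card_ord -sumr_const.
  by apply: ler_sum => i _; rewrite /lp; case: ifP => // _; have := l2_le1 i; nra.
- rewrite (frob2_gram_unitary_conj uP y'E) -[n in n%:R]card_ord -sumr_const.
  by apply: ler_sum => i _; rewrite /ln; case: ifP => // _; have := l2_le1 i; nra.
Qed.

End GramDecomposition.

Section ComplexContinuity.
Variables (R : realType) (T : topologicalType).
Local Notation C := R[i].

Lemma continuous_sum I (s : seq I) (P : pred I) (f : I -> T -> R) :
  (forall i, continuous (f i)) -> continuous (fun t => \sum_(i <- s | P i) f i t).
Proof.
move=> fc; elim: s => [|a s IH].
  by under eq_fun do rewrite big_nil; apply: cst_continuous.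
under eq_fun do rewrite big_cons; case: (P a) => // t.
exact: (continuousD (fc a t) (IH t)).
Qed.

Definition continuousC (f : T -> C) :=
  continuous (fun t => complex.Re (f t)) /\ continuous (fun t => complex.Im (f t)).

Lemma continuousC_cst (z : C) : continuousC (fun=> z).
Proof. by split; apply: cst_continuous. Qed.

Lemma continuousC_add (f g : T -> C) :
  continuousC f -> continuousC g -> continuousC (fun t => f t + g t).
Proof.
move=> [fRe fIm] [gRe gIm]; split => t; under eq_fun do rewrite raddfD /=.
  exact: (continuousD (fRe t) (gRe t)).
exact: (continuousD (fIm t) (gIm t)).
Qed.

Lemma continuousC_sub (f g : T -> C) :
  continuousC f -> continuousC g -> continuousC (fun t => f t - g t).
Proof.
move=> cf [gRe gIm]; apply: continuousC_add => //.
split => t; under eq_fun do rewrite raddfN /=.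
  exact: (continuousN (gRe t)).
exact: (continuousN (gIm t)).
Qed.

Lemma continuousC_mul (f g : T -> C) :
  continuousC f -> continuousC g -> continuousC (fun t => f t * g t).
Proof.
move=> [fRe fIm] [gRe gIm]; split => t.
  have -> : (fun t => complex.Re (f t * g t)) =
      (fun t => complex.Re (f t) * complex.Re (g t) -
                complex.Im (f t) * complex.Im (g t)).
    by apply/funext => t'; case: (f t') => ? ?; case: (g t').
  exact: (continuousB (continuousM (fRe t) (gRe t)) (continuousM (fIm t) (gIm t))).
have -> : (fun t => complex.Im (f t * g t)) =
    (fun t => complex.Re (f t) * complex.Im (g t) + complex.Im (f t) * complex.Re (g t)).
  by apply/funext => t'; case: (f t') => ? ?; case: (g t').
exact: (continuousD (continuousM (fRe t) (gIm t)) (continuousM (fIm t) (gRe t))).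
Qed.

Lemma continuousC_conj (f : T -> C) : continuousC f -> continuousC (fun t => (f t)^*).
Proof.
move=> [fRe fIm]; split => t.
  have -> : (fun t => complex.Re (f t)^*) = (fun t => complex.Re (f t)).
    by apply/funext => t'; case: (f t').
  exact: fRe.
have -> : (fun t => complex.Im (f t)^*) = (fun t => - complex.Im (f t)).
  by apply/funext => t'; case: (f t').
exact: (continuousN (fIm t)).
Qed.

Lemma continuousC_sum I (s : seq I) (P : pred I) (f : I -> T -> C) :
  (forall i, continuousC (f i)) -> continuousC (fun t => \sum_(i <- s | P i) f i t).
Proof.
move=> fc; elim: s => [|a s IH].
  by under eq_fun do rewrite big_nil; apply: continuousC_cst.
by under eq_fun do rewrite big_cons; case: (P a) => //; apply: continuousC_add.
Qed.

Definition continuous_mx p q (F : T -> 'M[C]_(p, q)) :=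
  forall i j, continuousC (fun t => F t i j).

Lemma continuous_mx_cst p q (M : 'M[C]_(p, q)) : continuous_mx (fun=> M).
Proof. by move=> i j; apply: continuousC_cst. Qed.

Lemma continuous_mx_mul p q s (F : T -> 'M[C]_(p, q)) (G : T -> 'M[C]_(q, s)) :
  continuous_mx F -> continuous_mx G -> continuous_mx (fun t => F t *m G t).
Proof.
move=> cF cG i j; under eq_fun do rewrite mxE.
by apply: continuousC_sum => k; apply: continuousC_mul.
Qed.

Lemma continuous_mx_adj p q (F : T -> 'M[C]_(p, q)) :
  continuous_mx F -> continuous_mx (fun t => adj (F t)).
Proof. by move=> cF i j; under eq_fun do rewrite !mxE; apply: continuousC_conj. Qed.

Lemma continuous_mx_sub p q (F G : T -> 'M[C]_(p, q)) :
  continuous_mx F -> continuous_mx G -> continuous_mx (fun t => F t - G t).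
Proof. by move=> cF cG i j; under eq_fun do rewrite !mxE; apply: continuousC_sub. Qed.

Lemma continuousC_mxtrace p (F : T -> 'M[C]_p) :
  continuous_mx F -> continuousC (fun t => \tr (F t)).
Proof. by move=> cF; apply: continuousC_sum => i; apply: cF. Qed.

End ComplexContinuity.

Lemma compact_pos_lower_bound (T : topologicalType) (R : realType)
    (K : set T) (f : T -> R) :
  compact K -> {within K, continuous f}%classic -> (forall t, K t -> 0 < f t) ->
  exists2 e, 0 < e & forall t, K t -> e <= f t.
Proof.
move=> cK cf f_gt0; have [->|/set0P K0] := eqVneq K set0; first by exists 1.
have [c /set_mem Kc min_c] := compact_EVT_min K0 cK cf.
by exists (f c) => [|t Kt]; [apply: f_gt0 | apply: min_c; apply: mem_set].
Qed.

Section RealCoordinates.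
Variables (R : realType) (n r : nat).
Local Notation C := R[i].

Definition cmx_of (W : 'M[R]_(n, r + r)) : 'M[C]_(n, r) :=
  \matrix_(i, j) (lsubmx W i j +i* rsubmx W i j).

Definition realmx (x : 'M[C]_(n, r)) : 'M[R]_(n, r + r) :=
  row_mx (map_mx (@complex.Re R) x) (map_mx (@complex.Im R) x).

Lemma realmxK : cancel realmx cmx_of.
Proof.
by move=> x; apply/matrixP => i j; rewrite mxE row_mxKl row_mxKr !mxE; case: (x i j).
Qed.

Lemma realmx_bounded (x : 'M[C]_(n, r)) (k : R) :
  frob2 x <= k -> forall i j, `|realmx x i j| <= k + 1.
Proof.
move=> xk i j.
have sq_bound (a b : R) : a ^+ 2 + b ^+ 2 <= k -> `|a| <= k + 1.
  move=> abk; have b2 := sqr_ge0 b; rewrite ler_norml; apply/andP; split; nra.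
rewrite mxE; case: splitP => j' _; rewrite mxE;
  have := le_trans (cnorm2_le_frob2 x i j') xk; rewrite /cnorm2 => xij.
  exact: sq_bound xij.
by apply: (sq_bound _ (complex.Re (x i j'))); rewrite addrC.
Qed.

(* Pairs of complex n x r matrices are coordinatised by real row vectors,
   where boxes are compact ([rV_compact]). *)
Local Notation V := 'rV[R]_(n * (r + r) + n * (r + r)).

Definition fst_cmx (v : V) := cmx_of (vec_mx (lsubmx v)).
Definition snd_cmx (v : V) := cmx_of (vec_mx (rsubmx v)).
Definition pair_rV (x y : 'M[C]_(n, r)) : V :=
  row_mx (mxvec (realmx x)) (mxvec (realmx y)).

Lemma fst_pair_rV x y : fst_cmx (pair_rV x y) = x.
Proof. by rewrite /fst_cmx row_mxKl mxvecK realmxK. Qed.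

Lemma snd_pair_rV x y : snd_cmx (pair_rV x y) = y.
Proof. by rewrite /snd_cmx row_mxKr mxvecK realmxK. Qed.

Lemma pair_rV_bounded x y (k : R) : frob2 x <= k -> frob2 y <= k ->
  forall l, `|pair_rV x y ord0 l| <= k + 1.
Proof.
move=> xk yk l; rewrite mxE; case: splitP => l' _; case/mxvec_indexP: l' => i j;
  rewrite mxvecE; exact: realmx_bounded.
Qed.

Lemma continuous_fst_cmx : continuous_mx fst_cmx.
Proof.
by move=> i j; split; under eq_fun do rewrite !mxE /=; apply: coord_continuous.
Qed.

Lemma continuous_snd_cmx : continuous_mx snd_cmx.
Proof.
by move=> i j; split; under eq_fun do rewrite !mxE /=; apply: coord_continuous.
Qed.

End RealCoordinates.

Section LowerBound.
Variables (R : realType) (n r m : nat) (A : 'I_m -> 'M[R[i]]_n).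
Local Notation V := 'rV[R]_(n * (r + r) + n * (r + r)).

Lemma beta_sub (x y : 'M[R[i]]_(n, r)) j :
  beta A x j - beta A y j = complex.Re (\tr (A j *m (x *m adj x - y *m adj y))).
Proof. by rewrite /beta mulmxBr mxtraceD linearN /= !mulmxA raddfB. Qed.

Definition gram_sub_rV (v : V) :=
  fst_cmx v *m adj (fst_cmx v) - snd_cmx v *m adj (snd_cmx v).

Definition beta_gap (v : V) :=
  vnorm2 (fun j => complex.Re (\tr (A j *m gram_sub_rV v))).

Lemma continuous_gram_sub_rV : continuous_mx gram_sub_rV.
Proof.
by apply: continuous_mx_sub; apply: continuous_mx_mul;
  do ?apply: continuous_mx_adj; (exact: continuous_fst_cmx || exact: continuous_snd_cmx).
Qed.

Lemma continuous_frob2_gram_sub_rV : continuous (fun v => frob2 (gram_sub_rV v)).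
Proof.
apply: continuous_sum => i; apply: continuous_sum => j v.
have [cRe cIm] := continuous_gram_sub_rV i j; under eq_fun do rewrite !expr2.
exact: (continuousD (continuousM (cRe v) (cRe v)) (continuousM (cIm v) (cIm v))).
Qed.

Lemma continuous_beta_gap : continuous beta_gap.
Proof.
apply: continuous_sum => j v; under eq_fun do rewrite expr2.
have [cRe _] := continuousC_mxtrace
  (continuous_mx_mul (continuous_mx_cst _ (A j)) continuous_gram_sub_rV).
exact: (continuousM (cRe v) (cRe v)).
Qed.

Lemma beta_gap_gt0 : beta_injective_mod_U r A ->
  forall v, frob2 (gram_sub_rV v) = 1 -> 0 < beta_gap v.
Proof.
move=> inj v v1; rewrite lt_def sumr_ge0 ?andbT => [|j _]; last exact: sqr_ge0.
apply/negP => /eqP gap0.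
have tr0 j : complex.Re (\tr (A j *m gram_sub_rV v)) = 0.
  apply/eqP; rewrite -sqrf_eq0; apply/eqP.
  by apply: (psumr_eq0P _ gap0) => // i _; apply: sqr_ge0.
have [U [uU fstE]] :
    exists U : 'M[R[i]]_r, U *m adj U = 1%:M /\ fst_cmx v = snd_cmx v *m U.
  by apply: inj => j; apply/eqP; rewrite -subr_eq0 beta_sub tr0.
move: v1; rewrite /gram_sub_rV fstE adjM mulmxA -(mulmxA _ U) uU mulmx1 subrr.
by rewrite frob2E mul0mx mxtrace0 => /eqP; rewrite eq_sym oner_eq0.
Qed.

Lemma beta_gap_lower_bound (B : R) : beta_injective_mod_U r A ->
  exists2 e, 0 < e & forall v : V, (forall l, `|v ord0 l| <= B) ->
    frob2 (gram_sub_rV v) = 1 -> e <= beta_gap v.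
Proof.
move=> inj.
pose K := ([set v : V | forall l, `[- B, B] (v ord0 l)] `&`
  (fun v => frob2 (gram_sub_rV v)) @^-1` [set 1])%classic.
have cK : compact K.
  apply: compact_closedI.
    by apply: (@rV_compact _ _ (fun=> `[- B, B]%classic)) => _; apply: segment_compact.
  apply: preimage_closed; last exact: closed_eq.
  by move=> v _; apply: continuous_frob2_gram_sub_rV.
have [e e_gt0 le_e] := compact_pos_lower_bound cK
  (continuous_subspaceT continuous_beta_gap) (fun v Kv => beta_gap_gt0 inj Kv.2).
exists e => // v vB v1; apply: le_e; split => // l.
by rewrite /= in_itv /= -ler_norml.
Qed.

Lemma exists_normalized_pair (x y : 'M[R[i]]_(n, r)) : x *m adj x != y *m adj y ->
  exists v : V, [/\ forall l, `|v ord0 l| <= n%:R + 1, frob2 (gram_sub_rV v) = 1 &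
    beta_gap v = vnorm2 (fun j => beta A x j - beta A y j) /
                 frob2 (x *m adj x - y *m adj y)].
Proof.
move=> xy; set D := x *m adj x - y *m adj y.
have f_gt0 : 0 < frob2 D by apply: frob2_gt0; rewrite subr_eq0.
set s := Num.sqrt (frob2 D); have s_gt0 : 0 < s by rewrite sqrtr_gt0.
set H := (s^-1)%:C *: D.
have sH : s%:C *: H = D by rewrite scalerA -rmorphM mulfV ?gt_eqF // rmorph1 scale1r.
have H1 : frob2 H = 1 by rewrite frob2_realZ exprVn sqr_sqrtr ?ltW // mulVf ?gt_eqF.
have [x' [y' [Hxy [x'n y'n]]]] := gram_sub_normal_form s_gt0 sH H1.
have gH : gram_sub_rV (pair_rV x' y') = H.
  by rewrite /gram_sub_rV fst_pair_rV snd_pair_rV -Hxy.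
exists (pair_rV x' y'); split; [exact: pair_rV_bounded | by rewrite gH |].
rewrite /beta_gap gH /vnorm2 mulr_suml; apply: eq_bigr => j _.
rewrite beta_sub -/D /H -scalemxAr mxtraceZ Re_realM exprMn exprVn.
by rewrite sqr_sqrtr ?ltW // mulrC.
Qed.

End LowerBound.

Theorem proposition4p1 (R : realType) (n r m : nat) (A : 'I_m -> 'M[R[i]]_n) :
  (forall j, is_hermitian (A j)) -> (r <= n)%N ->
  beta_injective_mod_U r A ->
  (0 < a0 r A)%E.
Proof.
move=> _ _ inj.
have [e e_gt0 le_e] := beta_gap_lower_bound (n%:R + 1) inj.
apply: (@lt_le_trans _ _ e%:E); first by rewrite lte_fin.
apply: le_ereal_inf_tmp => _ [_ [x [y [xy ->]]] <-].
have [v [vB v1 <-]] := exists_normalized_pair A xy.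
by rewrite lee_fin le_e.
Qed.
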